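(* Let $\sigma$ be a strongly erasing $k$-block substitution with $w_\epsilon\ne1^k$ that satisfies the optimality condition. Then the set $\mathcal D$ of points $x\in\mathbb I$ whose $f_\sigma$-orbit $\{f_\sigma^n(x):n\ge0\}$ is dense in $\mathbb I$ is uncountable and dense in $\mathbb I$.
   Context: Notation: $\mathbb I=[0,1]$. $\{0,1\}^*$ and $\{0,1\}^\omega$ denote finite and infinite binary words, and $\epsilon$ is the empty word. For a word $w$, set $0.w=\sum_iw_i2^{-i}$. For $x\in(0,1]$, $\widetilde x$ is the unique infinite binary expansion of $x$ not ending in $0^\infty$. Fix $k\ge2$. An erasing $k$-block substitution is a map $\sigma:\{0,1\}^k\to\{0,1\}^*$ with exactly one block $w_\epsilon$ such that $\sigma(w_\epsilon)=\epsilon$. It acts blockwise on infinite words and on finite words of length a multiple of $k$, concatenating the images of consecutive $k$-blocks. $k$-rounding: a $k$-rounding of $w$ is any word $wv$ whose length is the least multiple of $k$ that is $\ge|w|$; if $|w|$ is a multiple of $k$, the only $k$-rounding of $w$ is $w$ itself. $\sigma$ is strongly erasing if for every $w\in\{0,1\}^*$ there exist $n\in\mathbb N$ and words $r_0,\dots,r_{n-1}$ such that $r_0$ is a $k$-rounding of $w$, $r_j$ is a $k$-rounding of $\sigma(r_{j-1})$ for $1\le j\le n-1$, and $\sigma(r_{n-1})=\epsilon$. The map $f_\sigma:\mathbb I\to\mathbb I$ is defined by $f_\sigma(x)=0.\sigma(\widetilde x)$ if $x\in(0,1]$ and $\widetilde x\neq w_\epsilon^\infty$, and $f_\sigma(x)=0$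 otherwise. Optimality condition: every $w\in\{0,1\}^\omega$ can be written as $w=\prod_{i\ge1}\sigma(b_i)$ with blocks $b_i\in\{0,1\}^k$ satisfying $\sigma(b_i)\ne\epsilon$. *)

From HB Require Import structures.
From Stdlib Require Import ClassicalEpsilon.
From mathcomp Require Import all_boot all_order all_algebra.
From mathcomp Require Import all_classical all_reals all_analysis.
Set Implicit Arguments. Unset Strict Implicit. Unset Printing Implicit Defensive.
Import Order.TTheory GRing.Theory Num.Theory numFieldNormedType.Exports.
Local Open Scope ring_scope.
Local Open Scope classical_set_scope.

(* Infinite binary words are [nat -> bool], letter i (0-based) is the
   (i+1)-th letter; finite words are [seq bool]. *)

Definition fval {R : realType} (s : seq bool) : R :=
  \sum_(i < size s) (nth false s i)%:R / 2 ^+ i.+1.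

Definition ival {R : realType} (w : nat -> bool) : R :=
  limn (fun n => fval (mkseq w n)).

Definition not_end0 (w : nat -> bool) : Prop :=
  forall n, exists m, (n <= m)%N /\ w m = true.

(* x~ : the unique infinite binary expansion of x not ending in 0^oo
   (meaningful for x in (0,1]) *)
Definition tilde {R : realType} (x : R) : nat -> bool :=
  epsilon (inhabits (fun _ => false)) (fun w => not_end0 w /\ ival w = x).

Definition iblock (k : nat) (w : nat -> bool) (i : nat) : k.-tuple bool :=
  [tuple w (i * k + j)%N | j < k].

Definition fblock (k : nat) (s : seq bool) (i : nat) : k.-tuple bool :=
  [tuple nth false s (i * k + j)%N | j < k].

Definition sigma_fin (k : nat) (sigma : k.-tuple bool -> seq bool)
  (s : seq bool) : seq bool :=
  flatten [seq sigma (fblock k s i) | i <- iota 0 (size s %/ k)].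

Definition sigma_pref (k : nat) (sigma : k.-tuple bool -> seq bool)
  (w : nat -> bool) (n : nat) : seq bool :=
  flatten [seq sigma (iblock k w i) | i <- iota 0 n].

(* 0.sigma(w) for an infinite word w (sigma(w) may be finite or infinite):
   the limit of the values of the prefixes sigma(b_1)...sigma(b_n) *)
Definition sigma_val {R : realType} (k : nat) (sigma : k.-tuple bool -> seq bool)
  (w : nat -> bool) : R :=
  limn (fun n => fval (sigma_pref sigma w n)).

Definition periodic (k : nat) (b : k.-tuple bool) : nat -> bool :=
  fun n => nth false b (n %% k).

Definition f_sigma {R : realType} (k : nat) (sigma : k.-tuple bool -> seq bool)
  (weps : k.-tuple bool) (x : R) : R :=
  if `[< 0 < x <= 1 /\ tilde x <> periodic weps >] then sigma_val sigma (tilde x)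
  else 0.

(* r is a k-rounding of w: r = w v with |r| the least multiple of k that is >= |w| *)
Definition krounding (k : nat) (w r : seq bool) : Prop :=
  exists v, r = w ++ v /\ size r = (k * ((size w + k.-1) %/ k))%N.

Definition strongly_erasing (k : nat) (sigma : k.-tuple bool -> seq bool) : Prop :=
  forall w : seq bool, exists rs : seq (seq bool),
    [/\ rs != [::],
        krounding k w (head [::] rs),
        (forall j, (0 < j < size rs)%N ->
            krounding k (sigma_fin sigma (nth [::] rs j.-1)) (nth [::] rs j))
      & sigma_fin sigma (last [::] rs) = [::]].

Definition optimal (k : nat) (sigma : k.-tuple bool -> seq bool) : Prop :=
  forall w : nat -> bool, exists b : nat -> k.-tuple bool,
    (forall i, sigma (b i) <> [::]) /\
    (forall n, let p := flatten [seq sigma (b i) | i <- iota 0 n] in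
               p = mkseq w (size p)).

From Pilot Require Import Defs.
From HB Require Import structures.
From Stdlib Require Import ClassicalEpsilon.
From mathcomp Require Import all_boot all_order all_algebra.
From mathcomp Require Import all_classical all_reals all_analysis.
From mathcomp Require Import zify lra.
Import Order.TTheory GRing.Theory Num.Theory numFieldNormedType.Exports.
Set Implicit Arguments. Unset Strict Implicit. Unset Printing Implicit Defensive.

(* The proof works with infinite binary words.  [sigma_inf w] is the word
   sigma(b_1) sigma(b_2) ... built from the k-blocks of w; on the value x = 0.w
   of a word w such that neither w nor sigma_inf w ends in 0^oo, f_sigma is
   x |-> 0.(sigma_inf w) (f_sigma_ival).
   1. Optimality makes sigma_inf surjective, and strong erasure lets every
      finite word u be continued into a word whose sigma_inf-orbit reaches any
      prescribed word (erasing_extension).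
   2. sigma_inf preserves eventual periodicity.  Aiming at t followed by the
      indicator of the powers of 2, which is not eventually periodic, gives the
      extension lemma: u continues to u q such that some iterated image of u q
      starts with t and the first i images of u q contain i ones each.
   3. Iterating the extension lemma over an enumeration of all finite words,
      with a free bit c_i inserted at each stage, yields words X(c, u0)
      starting with u0 whose orbits visit every cylinder and never end in
      0^oo; c |-> X(c, u0) is injective.
   4. Hence the values 0.X(c, u0) have dense orbits.  They form an
      uncountable set (Cantor's diagonal argument, c ranging over {0,1}^N)
      which is dense in [0, 1] (u0 ranging over binary expansions). *)

Implicit Types (w y : nat -> bool) (s t u : seq bool).

Lemma nth_prefix s t m : prefix s t -> m < size s ->
  nth false t m = nth false s m.
Proof. by move=> /prefixP[x ->] hm; rewrite nth_cat hm. Qed.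

Lemma count_prefix s t : prefix s t -> count id s <= count id t.
Proof. by move=> /prefixP[x ->]; rewrite count_cat leq_addr. Qed.

Lemma flatten_nseqS (T : Type) (C : seq T) c : flatten (nseq c.+1 C) = flatten (nseq c C) ++ C.
Proof. by elim: c => [|c IH] /=; rewrite ?cats0 // -catA -IH. Qed.

Lemma size_flatten_nseq (T : Type) (C : seq T) c : size (flatten (nseq c C)) = c * size C.
Proof. by elim: c => //= c IH; rewrite size_cat IH mulSn. Qed.

Lemma nth_flatten_nseq_shift (T : Type) (x0 : T) (C : seq T) c j : j < c * size C ->
  nth x0 (flatten (nseq c.+1 C)) (j + size C) = nth x0 (flatten (nseq c.+1 C)) j.
Proof.
move=> hj; rewrite [in RHS]flatten_nseqS nth_cat size_flatten_nseq hj /=.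
by rewrite nth_cat ltnNge leq_addl /= addnK.
Qed.

Definition cyl (s : seq bool) (w : nat -> bool) : Prop :=
  forall m, m < size s -> nth false s m = w m.

Lemma cylE s w : cyl s w <-> s = mkseq w (size s).
Proof.
split=> [h|->]; last by move=> m; rewrite size_mkseq => hm; rewrite nth_mkseq.
by apply: (@eq_from_nth _ false); rewrite ?size_mkseq // => m hm; rewrite nth_mkseq // h.
Qed.

Lemma cyl_mkseq w L : cyl (mkseq w L) w.
Proof. by apply/cylE; rewrite size_mkseq. Qed.

Lemma prefix_mkseq w L L' : L <= L' -> prefix (mkseq w L) (mkseq w L').
Proof. by move=> /subnKC <-; rewrite /mkseq iotaD map_cat prefix_prefix. Qed.

Lemma cyl_prefix_mkseq s w L : cyl s w -> L <= size s -> prefix (mkseq w L) s.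
Proof. by move=> /cylE {2}-> h; apply: prefix_mkseq. Qed.

Lemma cyl_prefix_mkseqW s w L : cyl s w -> size s <= L -> prefix s (mkseq w L).
Proof. by move=> /cylE {2}-> h; apply: prefix_mkseq. Qed.

Lemma cyl_prefix s t w : prefix s t -> cyl t w -> cyl s w.
Proof.
move=> hp ht m hm; rewrite -(nth_prefix hp hm); apply: ht.
exact: leq_trans hm (size_prefix hp).
Qed.

Definition catw (s : seq bool) (y : nat -> bool) (m : nat) : bool :=
  if m < size s then nth false s m else y (m - size s).

Lemma catw_cat s t y : catw s (catw t y) = catw (s ++ t) y.
Proof.
apply: funext => m; rewrite /catw size_cat nth_cat.
case: (ltnP m (size s)) => h1; first by rewrite (ltn_addr _ h1).
case: ifP => h2; first by rewrite ifT //; lia.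
by rewrite ifF ?subnDA //; apply/negbTE; rewrite -leqNgt; lia.
Qed.

Lemma catw_nil y : catw [::] y = y.
Proof. by apply: funext => m; rewrite /catw /= subn0. Qed.

Lemma cyl_catw s y : cyl s (catw s y).
Proof. by move=> m hm; rewrite /catw hm. Qed.

Lemma not_end0_count w : not_end0 w -> forall c, exists L, c <= count id (mkseq w L).
Proof.
move=> h; elim=> [|c [L hL]]; first by exists 0.
have [m [hm wm]] := h L; exists m.+1.
rewrite mkseqS -cats1 count_cat /= wm.
have := count_prefix (prefix_mkseq w hm); lia.
Qed.

Lemma count_not_end0 w : (forall c, exists s, cyl s w /\ c <= count id s) -> not_end0 w.
Proof.
move=> h n; apply: contrapT => /forallNP hn.
have zero m : n <= m -> w m = false by move=> hm; apply/negP => wm; apply: (hn m).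
have [s [/cylE hs hc]] := h n.+1; move: hc; rewrite hs.
suff : count id (mkseq w (size s)) <= n by lia.
elim: (size s) => [|L IH] //; rewrite mkseqS -cats1 count_cat /=.
have [hL|hL] := ltnP L n; last by rewrite zero //; lia.
by have := count_size id (mkseq w L); rewrite size_mkseq; lia.
Qed.

Definition ev_periodic w : Prop :=
  exists p q, 0 < p /\ forall m, q <= m -> w (m + p) = w m.

Lemma not_ev_periodic_not_end0 w : ~ ev_periodic w -> not_end0 w.
Proof.
move=> h n; apply: contrapT => /forallNP hn; apply: h; exists 1, n; split => // m hm.
have zero m' : n <= m' -> w m' = false by move=> hm'; apply/negP => wm; apply: (hn m').
by rewrite !zero //; lia.
Qed.

(* The indicator of the powers of 2 has gaps of unbounded length, hence it is not
   eventually periodic; neither is any word t followed by it. *)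
Definition pow2_word (m : nat) : bool := [exists a : 'I_m.+1, m == 2 ^ a].

Lemma pow2_wordE a : pow2_word (2 ^ a).
Proof.
apply/existsP; have h : a < (2 ^ a).+1 by have := ltn_expl a (isT : 1 < 2); lia.
by exists (Ordinal h).
Qed.

Lemma pow2_word_not_ev_periodic : ~ ev_periodic pow2_word.
Proof.
move=> [p [q [p0 h]]]; pose a := q + p.
have ha : a < 2 ^ a by apply: ltn_expl.
have := h (2 ^ a) ltac:(lia); rewrite pow2_wordE => /existsP[b /eqP hb].
case: (leqP b a) => hba; first by have := leq_pexp2l (isT : 0 < 2) hba; lia.
have : 2 ^ a.+1 <= 2 ^ b by rewrite leq_pexp2l.
rewrite expnS; lia.
Qed.

Lemma catw_pow2_not_ev_periodic t : ~ ev_periodic (catw t pow2_word).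
Proof.
move=> [p [q [p0 h]]]; apply: pow2_word_not_ev_periodic; exists p, q; split => // m hm.
have := h (m + size t) ltac:(lia); rewrite /catw !ifF; try (apply/negbTE; rewrite -leqNgt; lia).
by rewrite addnK; have -> : m + size t + p - size t = m + p by lia.
Qed.

Section InfiniteImage.
Variables (k : nat) (sigma : k.-tuple bool -> seq bool).
Hypothesis k_gt0 : 0 < k.

Lemma sigma_pref_add w n d :
  sigma_pref sigma w (n + d) =
  sigma_pref sigma w n ++ flatten [seq sigma (iblock k w i) | i <- iota n d].
Proof. by rewrite /sigma_pref iotaD map_cat flatten_cat. Qed.

Lemma prefix_sigma_pref w n n' : n <= n' ->
  prefix (sigma_pref sigma w n) (sigma_pref sigma w n').
Proof. by move=> /subnKC <-; rewrite sigma_pref_add prefix_prefix. Qed.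

(* [sigma_inf w]: the word sigma(b_1) sigma(b_2) ... for the k-blocks b_i of w,
   padded with 0s when it is finite; its m-th letter is read off any long enough
   prefix [sigma_pref sigma w n]. *)
Definition sigma_inf w (m : nat) : bool :=
  match pselect (exists n, m < size (sigma_pref sigma w n)) with
  | left H => nth false (sigma_pref sigma w (xchoose H)) m
  | right _ => false
  end.

Lemma sigma_infE w n m : m < size (sigma_pref sigma w n) ->
  sigma_inf w m = nth false (sigma_pref sigma w n) m.
Proof.
rewrite /sigma_inf; case: pselect => [H|H] hm; last by exfalso; apply: H; exists n.
have := xchooseP H; set n' := xchoose H => hn'.
case: (leqP n n') => h; first by rewrite (nth_prefix (prefix_sigma_pref _ h)).
by rewrite (nth_prefix (prefix_sigma_pref _ (ltnW h)) hn').
Qed.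

Lemma sigma_inf0 w m : (forall n, size (sigma_pref sigma w n) <= m) -> sigma_inf w m = false.
Proof. by rewrite /sigma_inf; case: pselect => // -[n hn] /(_ n); rewrite leqNgt hn. Qed.

Lemma cyl_sigma_pref w n : cyl (sigma_pref sigma w n) (sigma_inf w).
Proof. by move=> m hm; rewrite (sigma_infE hm). Qed.

Definition infinite_image w : Prop := forall m, exists n, m < size (sigma_pref sigma w n).

Lemma not_end0_infinite_image w : not_end0 (sigma_inf w) -> infinite_image w.
Proof.
move=> h m; apply: contrapT => /forallNP hm.
have [m' [hm' hw]] := h m; move: hw; rewrite sigma_inf0 // => n.
by have := hm n; lia.
Qed.

Lemma iblock_catw s y a i : size s = a * k ->
  iblock k (catw s y) i = if i < a then fblock k s i else iblock k y (i - a).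
Proof.
move=> hs; rewrite /iblock /fblock /catw hs.
case: ifP => hi; apply: eq_mktuple => j /=; have := ltn_ord j.
  by move=> hj; rewrite ifT //; nia.
move/negbT: hi; rewrite -leqNgt => hi hj.
by rewrite ifF; [congr y; nia | apply/negbTE; rewrite -leqNgt; nia].
Qed.

Lemma sigma_pref_catw s y a n : size s = a * k ->
  sigma_pref sigma (catw s y) (a + n) = sigma_fin sigma s ++ sigma_pref sigma y n.
Proof.
move=> hs; rewrite sigma_pref_add; congr (_ ++ _).
  rewrite /sigma_pref /sigma_fin hs mulnK //; congr flatten.
  apply/eq_in_map => i; rewrite mem_iota => /andP[_ hi].
  by rewrite (iblock_catw _ _ hs) hi.
rewrite /sigma_pref -{1}(addn0 a) iotaDl -map_comp; congr flatten.
apply: eq_map => i /=; rewrite (iblock_catw _ _ hs) ifF ?addKn //.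
by apply/negbTE; rewrite -leqNgt leq_addr.
Qed.

Lemma sigma_inf_catw s y a : size s = a * k ->
  sigma_inf (catw s y) = catw (sigma_fin sigma s) (sigma_inf y).
Proof.
move=> hs; apply: funext => m; rewrite [RHS]/catw; case: ifP => hm.
  by rewrite (@sigma_infE _ (a + 0)) sigma_pref_catw // ?nth_cat ?hm // size_cat ltn_addr.
move/negbT: hm; rewrite -leqNgt => hm.
case: (pselect (exists n, m - size (sigma_fin sigma s) < size (sigma_pref sigma y n)))
  => [[n hn]|/forallNP hn].
  rewrite (@sigma_infE _ (a + n)) ?sigma_pref_catw ?nth_cat ?ltnNge ?hm ?(sigma_infE hn) //.
  by rewrite size_cat; lia.
rewrite [RHS]sigma_inf0 => [|n]; last by have := hn n; lia.
rewrite sigma_inf0 // => n.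
have : size (sigma_pref sigma (catw s y) n) <= size (sigma_pref sigma (catw s y) (a + n)).
  exact/size_prefix/prefix_sigma_pref/leq_addl.
rewrite sigma_pref_catw // size_cat; have := hn n; lia.
Qed.

Lemma sigma_fin_mkseq w L : sigma_fin sigma (mkseq w L) = sigma_pref sigma w (L %/ k).
Proof.
rewrite /sigma_fin size_mkseq /sigma_pref; congr flatten.
apply/eq_in_map => i; rewrite mem_iota => /andP[_ hi]; congr sigma.
rewrite /fblock /iblock; apply: eq_mktuple => j; rewrite nth_mkseq //.
have := leq_divM L k; have := ltn_ord j; rewrite add0n in hi; nia.
Qed.

Lemma cyl_sigma_fin s w : cyl s w -> cyl (sigma_fin sigma s) (sigma_inf w).
Proof. by move=> /cylE ->; rewrite sigma_fin_mkseq; apply: cyl_sigma_pref. Qed.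

Lemma cyl_iter j s w : cyl s w -> cyl (iter j (sigma_fin sigma) s) (iter j sigma_inf w).
Proof. by move=> h; elim: j => //= j IH; apply: cyl_sigma_fin. Qed.

Lemma prefix_sigma_fin s t : prefix s t -> prefix (sigma_fin sigma s) (sigma_fin sigma t).
Proof.
move=> /prefixP[x ->]; rewrite /sigma_fin.
have : size s %/ k <= size (s ++ x) %/ k by rewrite leq_div2r // size_cat leq_addr.
move=> /subnKC <-; rewrite iotaD map_cat flatten_cat; apply/prefixP; eexists.
congr (_ ++ _); congr flatten; apply/eq_in_map => i.
rewrite mem_iota => /andP[_ hi]; congr sigma.
rewrite /fblock; apply: eq_mktuple => j; rewrite nth_cat ifT //.
have := leq_divM (size s) k; have := ltn_ord j; rewrite add0n in hi; nia.
Qed.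

Lemma prefix_iter_sigma_fin j s t : prefix s t ->
  prefix (iter j (sigma_fin sigma) s) (iter j (sigma_fin sigma) t).
Proof. by move=> h; elim: j => //= j IH; apply: prefix_sigma_fin. Qed.

Lemma prefix_iter_mkseq j w L L' : L <= L' ->
  prefix (iter j (sigma_fin sigma) (mkseq w L)) (iter j (sigma_fin sigma) (mkseq w L')).
Proof. by move=> hL; apply/prefix_iter_sigma_fin/prefix_mkseq. Qed.

Lemma size_iter_mkseq j w :
  (forall j', j' < j -> infinite_image (iter j' sigma_inf w)) ->
  forall m, exists L, m <= size (iter j (sigma_fin sigma) (mkseq w L)).
Proof.
elim: j => [|j IH] hinf m; first by exists m; rewrite size_mkseq.
have [n hn] := hinf j (ltnSn j) m.
have [L hL] := IH (fun j' h => hinf j' (ltnW h)) (n * k).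
exists L; set s := iter j (sigma_fin sigma) (mkseq w L) in hL *.
have hp : cyl s (iter j sigma_inf w) by apply/cyl_iter/cyl_mkseq.
have := prefix_sigma_fin (cyl_prefix_mkseq hp hL); rewrite sigma_fin_mkseq mulnK // => h.
by have := size_prefix h; rewrite /= -/s; lia.
Qed.

(* sigma maps eventually periodic words to eventually periodic words: if w has
   period p from position q on, the images of the blocks from q on repeat the
   word C = sigma(b_q) ... sigma(b_(q+p-1)). *)
Lemma iblock_periodic w p q : (forall m, q <= m -> w (m + p) = w m) ->
  forall c i, q <= i -> iblock k w (c * p + i) = iblock k w i.
Proof.
move=> hw; have hwc c m : q <= m -> w (m + c * p) = w m.
  move=> hm; elim: c => [|c IH]; first by rewrite addn0.
  by rewrite mulSn (addnC p) addnA hw ?IH //; lia.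
move=> c i hi; apply: eq_mktuple => j.
have -> : (c * p + i) * k + j = (i * k + j) + (c * k) * p by nia.
by rewrite hwc //; nia.
Qed.

Lemma sigma_pref_periodic w p q : (forall m, q <= m -> w (m + p) = w m) ->
  forall c, sigma_pref sigma w (q + c * p) = sigma_pref sigma w q ++
    flatten (nseq c (flatten [seq sigma (iblock k w i) | i <- iota q p])).
Proof.
move=> /iblock_periodic hblock; elim=> [|c IH]; first by rewrite addn0 cats0.
rewrite mulSn (addnC p) addnA sigma_pref_add IH flatten_nseqS -catA.
congr (_ ++ (_ ++ _)); rewrite (addnC q) iotaDl -map_comp; congr flatten.
by apply/eq_in_map => i; rewrite mem_iota => /andP[hi _] /=; rewrite hblock.
Qed.

(* The image of an eventually periodic word is either finite (then padded with
   0s) or eventually periodic with period |C|. *)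
Lemma ev_periodic_sigma_inf w : ev_periodic w -> ev_periodic (sigma_inf w).
Proof.
move=> [p [q [p0 /sigma_pref_periodic]]].
set A := sigma_pref sigma w q; set C := flatten _ => hpc.
have [hC|hC] := eqVneq C [::].
  exists 1, (size A); split => // m hm.
  have hA n : size (sigma_pref sigma w n) <= size A.
    have : size (sigma_pref sigma w n) <= size (sigma_pref sigma w (q + n * p)).
      by apply/size_prefix/prefix_sigma_pref; nia.
    rewrite hpc hC size_cat size_flatten_nseq /=; lia.
  by rewrite !sigma_inf0 // => n; apply: leq_trans (hA n) _; lia.
have sC : 0 < size C by rewrite lt0n size_eq0.
exists (size C), (size A); split => // m hm.
have hsz : m + size C < size (sigma_pref sigma w (q + m.+2 * p)).
  by rewrite hpc size_cat size_flatten_nseq; nia.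
rewrite (sigma_infE hsz) (sigma_infE (leq_ltn_trans (leq_addr _ _) hsz)) hpc.
have [hA1 hA2] : (m < size A) = false /\ (m + size C < size A) = false.
  by split; apply/negbTE; rewrite -leqNgt; lia.
rewrite [LHS]nth_cat [RHS]nth_cat hA1 hA2 -addnBAC //.
by rewrite nth_flatten_nseq_shift //; nia.
Qed.

Lemma ev_periodic_iter d w : ev_periodic w -> ev_periodic (iter d sigma_inf w).
Proof. by move=> h; elim: d => //= d IH; apply: ev_periodic_sigma_inf. Qed.

(* Every block of weps^oo is weps, which is erased. *)
Lemma sigma_inf_periodic weps :
  sigma weps = [::] -> sigma_inf (Defs.periodic weps) = fun _ => false.
Proof.
move=> hw; apply: funext => m; apply: sigma_inf0 => n.
have hb i : sigma (iblock k (Defs.periodic weps) i) = [::].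
  rewrite -hw; congr sigma; apply: eq_from_tnth => j.
  by rewrite tnth_mktuple /Defs.periodic modnMDl modn_small // (tnth_nth false).
by rewrite /sigma_pref (eq_map hb); elim: (iota 0 n).
Qed.

End InfiniteImage.

Lemma eventually_all (P : nat -> nat -> Prop) i :
  (forall j L L', L <= L' -> P j L -> P j L') ->
  (forall j, j <= i -> exists L, P j L) -> exists L, forall j, j <= i -> P j L.
Proof.
move=> hmono; elim: i => [|i IH] h.
  by have [L hL] := h 0 (leqnn 0); exists L => j; rewrite leqn0 => /eqP ->.
have [L1 hL1] := IH (fun j hj => h j (leqW hj)).
have [L2 hL2] := h i.+1 (leqnn _).
exists (maxn L1 L2) => j; rewrite leq_eqVlt => /orP[/eqP ->|hj].
  by apply: hmono hL2; rewrite leq_maxr.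
by apply: hmono (hL1 j hj); rewrite leq_maxl.
Qed.

Section Extension.
Variables (k : nat) (sigma : k.-tuple bool -> seq bool).
Hypotheses (k_gt0 : 0 < k) (opt : optimal sigma) (se : strongly_erasing sigma).

Lemma sigma_inf_surj z : exists y, sigma_inf sigma y = z.
Proof.
have [b [hb hp]] := opt z.
pose y m := nth false (b (m %/ k)) (m %% k).
have hby i : iblock k y i = b i.
  apply: eq_from_tnth => j; rewrite tnth_mktuple /y divnMDl // modnMDl.
  by rewrite divn_small // modn_small // addn0 (tnth_nth false).
have hpy n : sigma_pref sigma y n = flatten [seq sigma (b i) | i <- iota 0 n].
  by congr flatten; apply: eq_map => i; rewrite /= hby.
have hsz n : n <= size (sigma_pref sigma y n).
  elim: n => // n IH; rewrite -addn1 sigma_pref_add size_cat /= cats0 hby.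
  have : size (sigma (b n)) != 0 by rewrite size_eq0; apply/eqP/hb.
  lia.
exists y; apply: funext => m; rewrite (@sigma_infE _ _ _ m.+1); last exact: hsz.
rewrite hpy; set F := flatten _; have e : F = mkseq z (size F) := hp m.+1.
by rewrite {1}e nth_mkseq // /F -hpy; exact: hsz.
Qed.

Lemma iter_sigma_inf_surj n z : exists y, iter n (sigma_inf sigma) y = z.
Proof.
elim: n z => [|n IH] z; first by exists z.
have [y <-] := IH z; have [y' <-] := sigma_inf_surj y.
by exists y'; rewrite iterSr.
Qed.

(* Strong erasure, through a chain of k-roundings r_0, ..., r_n: after finitely
   many steps the prefix r_0 disappears, so r_0 extends to a preimage of any z. *)
Lemma erasing_chain rs r0 : (exists a, size r0 = a * k) ->
  (forall j, j < size rs ->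
     krounding k (sigma_fin sigma (nth [::] (r0 :: rs) j)) (nth [::] rs j)) ->
  sigma_fin sigma (last r0 rs) = [::] ->
  forall z, exists y, iter (size rs).+1 (sigma_inf sigma) (catw r0 y) = z.
Proof.
elim: rs r0 => [|r1 rs IH] r0 [a ha] hchain hlast z.
  have [y <-] := sigma_inf_surj z; exists y.
  by rewrite /= (sigma_inf_catw _ k_gt0 _ ha) hlast catw_nil.
have [v1 [e1 s1]] := hchain 0 isT.
have [y1 hy1] : exists y1, iter (size rs).+1 (sigma_inf sigma) (catw r1 y1) = z.
  apply: IH => //; last by move=> j; apply: (hchain j.+1).
  by exists ((size (sigma_fin sigma r0) + k.-1) %/ k); rewrite s1 mulnC.
have [y0 hy0] := sigma_inf_surj (catw v1 y1).
exists y0; rewrite [size _]/= iterSr (sigma_inf_catw _ k_gt0 _ ha) hy0 catw_cat -e1.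
exact: hy1.
Qed.

Lemma erasing_extension u z : exists y n, iter n (sigma_inf sigma) (catw u y) = z.
Proof.
have [[|r0 rs] [//= _ [v0 [e0 s0]] hchain hlast]] := se u.
have [y0 hy0] : exists y0, iter (size rs).+1 (sigma_inf sigma) (catw r0 y0) = z.
  apply: erasing_chain => //; last by move=> j; apply: (hchain j.+1).
  by exists ((size u + k.-1) %/ k); rewrite s0 mulnC.
by exists (catw v0 y0), (size rs).+1; rewrite catw_cat -e0.
Qed.

(* Any prefix u extends to a word w0 whose N-th image begins with t, for some
   N >= i, while none of its first N images is eventually periodic: take for
   z the word t followed by the powers-of-2 indicator and pull it back. *)
Lemma orbit_to_target u t i : exists w0 N,
  [/\ cyl u w0, i <= N, cyl t (iter N (sigma_inf sigma) w0)
    & forall j, j <= N -> ~ ev_periodic (iter j (sigma_inf sigma) w0)].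
Proof.
have [z' hz'] := iter_sigma_inf_surj i (catw t pow2_word).
have [y [n hy]] := erasing_extension u z'.
have hN : iter (i + n) (sigma_inf sigma) (catw u y) = catw t pow2_word.
  by rewrite iterD hy; exact: hz'.
exists (catw u y), (i + n).
split; [exact: cyl_catw | exact: leq_addr | rewrite hN; exact: cyl_catw |].
move=> j /subnKC hj hper; apply: (@catw_pow2_not_ev_periodic t).
by rewrite -hN -hj addnC iterD; apply: ev_periodic_iter.
Qed.

Lemma nonperiodic_images_infinite w0 N :
  (forall j, j <= N -> ~ ev_periodic (iter j (sigma_inf sigma) w0)) ->
  forall j, j < N -> infinite_image sigma (iter j (sigma_inf sigma) w0).
Proof. by move=> h j hj; apply/not_end0_infinite_image/not_ev_periodic_not_end0/(h j.+1). Qed.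

Lemma count_iter_mkseq w0 N j c :
  (forall j, j <= N -> ~ ev_periodic (iter j (sigma_inf sigma) w0)) -> j <= N ->
  exists L, c <= count id (iter j (sigma_fin sigma) (mkseq w0 L)).
Proof.
move=> hN hj; have [m hm] := not_end0_count (not_ev_periodic_not_end0 (hN j hj)) c.
have [L hL] : exists L, m <= size (iter j (sigma_fin sigma) (mkseq w0 L)).
  apply: size_iter_mkseq => // j' hj'.
  by apply: nonperiodic_images_infinite hN _ _; lia.
exists L; apply: leq_trans hm (count_prefix (cyl_prefix_mkseq _ hL)).
exact/cyl_iter/cyl_mkseq.
Qed.

Lemma extension_step u t i : exists q, exists N,
  prefix t (iter N (sigma_fin sigma) (u ++ q)) /\
  forall j, j <= i -> i <= count id (iter j (sigma_fin sigma) (u ++ q)).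
Proof.
have [w0 [N [hu hiN ht hN]]] := orbit_to_target u t i.
have [L0 hL0] : exists L, size t <= size (iter N (sigma_fin sigma) (mkseq w0 L)).
  by apply: size_iter_mkseq => //; apply: nonperiodic_images_infinite.
have [L1 hL1] : exists L, forall j, j <= i ->
    i <= count id (iter j (sigma_fin sigma) (mkseq w0 L)).
  apply: eventually_all => [j L L' hL h|j hj].
    exact: leq_trans h (count_prefix (prefix_iter_mkseq sigma k_gt0 j w0 hL)).
  by apply: count_iter_mkseq hN _; lia.
pose L := maxn (maxn L0 L1) (size u).
have [q hq] : exists q, mkseq w0 L = u ++ q.
  by apply/prefixP/cyl_prefix_mkseqW; rewrite ?leq_maxr.
exists q, N; rewrite -hq; split => [|j hj].
  have htL0 : prefix t (iter N (sigma_fin sigma) (mkseq w0 L0)).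
    rewrite [t](iffLR (cylE _ _) ht); apply: cyl_prefix_mkseq hL0.
    exact/cyl_iter/cyl_mkseq.
  apply: prefix_trans htL0 (prefix_iter_mkseq sigma k_gt0 N w0 _).
  by rewrite /L (leq_trans (leq_maxl L0 L1)) // leq_maxl.
apply: leq_trans (hL1 j hj) (count_prefix (prefix_iter_mkseq sigma k_gt0 j w0 _)).
by rewrite /L (leq_trans (leq_maxr L0 L1)) // leq_maxl.
Qed.

(* Stage i extends the previous
   stage by a free bit c_(i-1), then by the extension lemma for the i-th finite
   word in an enumeration of all finite words; the limit word X(c, u0) begins
   with u0, has an iterated image in every cylinder, and all its iterated
   images contain infinitely many 1s. *)
Definition word_enum (i : nat) : seq bool := odflt [::] (unpickle i).

Lemma word_enumK t : word_enum (pickle t) = t.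
Proof. by rewrite /word_enum pickleK. Qed.

Definition extend u i : seq bool := u ++ sval (cid (extension_step u (word_enum i) i)).

Lemma extendP u i : exists N,
  prefix (word_enum i) (iter N (sigma_fin sigma) (extend u i)) /\
  forall j, j <= i -> i <= count id (iter j (sigma_fin sigma) (extend u i)).
Proof. exact: svalP (cid (extension_step u (word_enum i) i)). Qed.

Fixpoint stage (c : nat -> bool) (u0 : seq bool) (i : nat) : seq bool :=
  if i is i'.+1 then extend (stage c u0 i' ++ [:: c i']) i else extend u0 0.

Lemma stageP c u0 i : exists N,
  prefix (word_enum i) (iter N (sigma_fin sigma) (stage c u0 i)) /\
  forall j, j <= i -> i <= count id (iter j (sigma_fin sigma) (stage c u0 i)).
Proof. by case: i => [|i]; apply: extendP. Qed.

Definition limit_word (c : nat -> bool) (u0 : seq bool) (m : nat) : bool :=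
  nth false (stage c u0 m.+1) m.

Lemma prefix_stage c u0 i i' : i <= i' -> prefix (stage c u0 i) (stage c u0 i').
Proof.
move=> /subnKC <-; elim: (i' - i) => [|d IH]; first by rewrite addn0 prefix_refl.
apply: prefix_trans IH _; rewrite addnS /= /extend -catA; exact: prefix_prefix.
Qed.

Lemma size_stage c u0 i : i <= size (stage c u0 i).
Proof. by elim: i => //= i IH; rewrite /extend !size_cat /=; lia. Qed.

Lemma cyl_stage c u0 i : cyl (stage c u0 i) (limit_word c u0).
Proof.
move=> m hm; rewrite /limit_word.
rewrite -(nth_prefix (prefix_stage c u0 (leq_maxl i m.+1)) hm).
by rewrite (nth_prefix (prefix_stage c u0 (leq_maxr i m.+1))) // size_stage.
Qed.

Lemma cyl_limit_word c u0 : cyl u0 (limit_word c u0).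
Proof. by apply: (cyl_prefix _ (cyl_stage (i:=0))); rewrite /= /extend prefix_prefix. Qed.

(* Stage i forces i ones into the first i images: the orbit of X(c, u0) never
   ends in 0^oo; stage (pickle t) puts an iterate in the cylinder of t. *)
Lemma limit_word_not_end0 c u0 j : not_end0 (iter j (sigma_inf sigma) (limit_word c u0)).
Proof.
apply: count_not_end0 => n; have [_ [_ hcount]] := stageP c u0 (maxn n j).
exists (iter j (sigma_fin sigma) (stage c u0 (maxn n j))); split.
  exact/cyl_iter/cyl_stage.
by apply: leq_trans (hcount j (leq_maxr _ _)); rewrite leq_maxl.
Qed.

Lemma limit_word_visits c u0 t : exists N, cyl t (iter N (sigma_inf sigma) (limit_word c u0)).
Proof.
have [N [ht _]] := stageP c u0 (pickle t); rewrite word_enumK in ht.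
by exists N; apply: (cyl_prefix ht); apply/cyl_iter/cyl_stage.
Qed.

(* The free bits can be read back from X(c, u0): c_i is its letter at position
   |stage i|. *)
Lemma limit_word_bit c u0 i : limit_word c u0 (size (stage c u0 i)) = c i.
Proof.
have hp : prefix (stage c u0 i ++ [:: c i]) (stage c u0 i.+1) by apply: prefix_prefix.
rewrite -(cyl_stage (i:=i.+1)); last by have := size_prefix hp; rewrite size_cat /= addn1.
by rewrite (nth_prefix hp) ?nth_cat ?ltnn ?subnn // size_cat /= addn1.
Qed.

Lemma limit_word_inj u0 : injective (limit_word^~ u0).
Proof.
move=> c c' hX; apply: funext => i0; apply: contrapT => hne.
have [i /eqP hi hmin] := ex_minnP (ex_intro (fun i => c i != c' i) i0 (introN eqP hne)).
have same_stage j : j <= i -> stage c u0 j = stage c' u0 j.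
  elim: j => [|j IH] hj //=; rewrite IH ?(ltnW hj) //.
  by have [-> //|/hmin] := eqVneq (c j) (c' j); lia.
by apply: hi; rewrite -(limit_word_bit c u0) -(limit_word_bit c' u0) -same_stage // hX.
Qed.

End Extension.

Local Open Scope ring_scope.
Local Open Scope classical_set_scope.

Section BinaryValues.
Local Unset Implicit Arguments.
Context {R : realType}.

Definition half_pow (n : nat) : R := (2 ^+ n)^-1.

Lemma half_powS n : half_pow n = 2 * half_pow n.+1.
Proof. by rewrite /half_pow exprS invfM mulrA mulfV ?mul1r. Qed.

Lemma half_pow_gt0 n : 0 < half_pow n.
Proof. by rewrite /half_pow invr_gt0 exprn_gt0. Qed.

Lemma half_pow0 : half_pow 0 = 1.
Proof. by rewrite /half_pow expr0 invr1. Qed.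

Lemma fval_rcons s (b : bool) : fval (rcons s b) = fval s + b%:R * half_pow (size s).+1 :> R.
Proof.
rewrite /fval size_rcons big_ord_recr /= nth_rcons ltnn eqxx; congr (_ + _).
by apply: eq_bigr => i _; rewrite nth_rcons ltn_ord.
Qed.

Definition pval w (n : nat) : R := fval (mkseq w n).

Lemma pval0 w : pval w 0 = 0.
Proof. by rewrite /pval /fval big_ord0. Qed.

Lemma pvalS w n : pval w n.+1 = pval w n + (w n)%:R * half_pow n.+1.
Proof. by rewrite /pval mkseqS fval_rcons size_mkseq. Qed.

Lemma bit_half_pow (b : bool) n : 0 <= b%:R * half_pow n <= half_pow n.
Proof. by case: b; rewrite ?mul1r ?mul0r lexx ?(ltW (half_pow_gt0 n)). Qed.

Lemma pval_nd w : nondecreasing_seq (pval w).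
Proof.
apply/nondecreasing_seqP => n; rewrite pvalS.
by have /andP[? _] := bit_half_pow (w n) n.+1; lra.
Qed.

Lemma pval_tail w n m : (n <= m)%N -> pval w m + half_pow m <= pval w n + half_pow n.
Proof.
move=> /subnKC <-; elim: (m - n)%N => [|d IH]; first by rewrite addn0.
rewrite addnS pvalS; have := bit_half_pow (w (n + d)%N) (n + d).+1.
have := half_powS (n + d); lra.
Qed.

Lemma pval_ub w n m : pval w m <= pval w n + half_pow n.
Proof.
have [h|h] := leqP m n; first by have := pval_nd w _ _ h; have := half_pow_gt0 n; lra.
by have := pval_tail w n m (ltnW h); have := half_pow_gt0 m; lra.
Qed.

Lemma pval_cvg w : pval w @ \oo --> ival w.
Proof.
have h : pval w @ \oo --> sup (range (pval w)).
  apply: nondecreasing_cvgn (pval_nd w) _; exists (pval w 0 + half_pow 0).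
  by move=> _ [m _ <-]; apply: pval_ub.
by rewrite /ival (cvg_lim _ h).
Qed.

Lemma ivalE w : ival w = limn (pval w).
Proof. by []. Qed.

Lemma ival_ge w n : pval w n <= ival w.
Proof.
by rewrite ivalE; apply: nondecreasing_cvgn_le (pval_nd w) (cvgP _ (pval_cvg w)) n.
Qed.

Lemma ival_le w n : ival w <= pval w n + half_pow n.
Proof.
by rewrite ivalE; apply: (limr_le (cvgP _ (pval_cvg w))); apply: nearW => m; apply: pval_ub.
Qed.

Lemma ival_gt w n : not_end0 w -> pval w n < ival w.
Proof.
move=> h; have [j [hj wj]] := h n; apply: lt_le_trans (ival_ge w j.+1).
rewrite pvalS wj mul1r; have := pval_nd w _ _ hj; have := half_pow_gt0 j.+1; lra.
Qed.

Lemma ival_itv w : 0 <= (ival w : R) <= 1.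
Proof.
have := ival_ge w 0; have := ival_le w 0; rewrite pval0 half_pow0.
by move=> h1 h2; apply/andP; split; lra.
Qed.

Lemma ival_gt0 w : not_end0 w -> 0 < ival w :> R.
Proof. by move=> h; have := ival_gt w 0 h; rewrite pval0. Qed.

(* Two words not ending in 0^oo with the same value coincide: at the first
   difference, the word with a 0 has the smaller value. *)
Lemma ival_lt w w' m : (forall i, (i < m)%N -> w i = w' i) ->
  w m = false -> w' m = true -> not_end0 w' -> ival w < ival w' :> R.
Proof.
move=> heq hw hw' h'.
have e : pval w m = pval w' m.
  by congr fval; apply/eq_in_map => i; rewrite mem_iota => /andP[_ hi]; apply: heq.
have := ival_le w m.+1; have := ival_gt w' m.+1 h'.
rewrite !pvalS hw hw' e /= mul0r mul1r addr0 /half_pow; lra.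
Qed.

Lemma ival_inj w w' : not_end0 w -> not_end0 w' -> ival w = ival w' :> R -> w = w'.
Proof.
move=> h h' e; apply: funext => i0; apply: contrapT => hne.
have [m /eqP hm hmin] := ex_minnP (ex_intro (fun i => w i != w' i) i0 (introN eqP hne)).
have heq i : (i < m)%N -> w i = w' i.
  by move=> hi; have [//|/hmin] := eqVneq (w i) (w' i); lia.
case ewm : (w m) hm => hm.
  have ew' : w' m = false by case: (w' m) hm.
  by have := ival_lt _ _ _ (fun i hi => esym (heq i hi)) ew' ewm h; rewrite e ltxx.
have ew' : w' m = true by case: (w' m) hm.
by have := ival_lt _ _ _ heq ewm ew' h'; rewrite e ltxx.
Qed.

Lemma tilde_ival w : not_end0 w -> tilde (ival w : R) = w.
Proof.
move=> h; have [h1 h2] := epsilon_spec (inhabits (fun _ : nat => false))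
   (fun w' => not_end0 w' /\ ival w' = (ival w : R)) (ex_intro _ w (conj h erefl)).
exact: ival_inj _ _ h1 h h2.
Qed.

Lemma fval_cyl s w : cyl s w -> fval s = pval w (size s).
Proof. by move=> /cylE {1}->. Qed.

(* When sigma(w) is infinite, 0.sigma(w) is the value of the word sigma_inf w:
   the values of the prefixes sigma(b_1)...sigma(b_n) are values of prefixes
   of sigma_inf w of lengths tending to infinity. *)
Lemma sigma_val_inf k (sigma : k.-tuple bool -> seq bool) w :
  infinite_image sigma w -> sigma_val sigma w = ival (sigma_inf sigma w) :> R.
Proof.
move=> hinf; pose len n := size (sigma_pref sigma w n); rewrite /sigma_val.
have -> : (fun n => fval (sigma_pref sigma w n) : R) = pval (sigma_inf sigma w) \o len.
  by apply: funext => n; apply: fval_cyl; apply: cyl_sigma_pref.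
apply: cvg_lim => //; apply: cvg_comp (pval_cvg _).
apply/cvgnyPgt => m; have [n hn] := hinf m; exists n => // n' /= hn'.
exact: leq_trans hn (size_prefix (prefix_sigma_pref _ _ hn')).
Qed.

Lemma f_sigma_ival k (sigma : k.-tuple bool -> seq bool) weps V : (0 < k)%N ->
  sigma weps = [::] -> not_end0 V -> not_end0 (sigma_inf sigma V) ->
  f_sigma sigma weps (ival V : R) = ival (sigma_inf sigma V).
Proof.
move=> k_gt0 hw hV hSV; rewrite /f_sigma asboolT.
  by rewrite tilde_ival // sigma_val_inf //; apply: not_end0_infinite_image.
split; first by rewrite ival_gt0 //; case/andP: (ival_itv V).
rewrite tilde_ival // => eV; move: hSV; rewrite eV sigma_inf_periodic //.
by case/(_ 0%N) => m [].
Qed.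

Lemma orbit_ival k (sigma : k.-tuple bool -> seq bool) weps X : (0 < k)%N ->
  sigma weps = [::] -> (forall j, not_end0 (iter j (sigma_inf sigma) X)) ->
  forall n, iter n (f_sigma sigma weps) (ival X : R) = ival (iter n (sigma_inf sigma) X).
Proof. by move=> k_gt0 hw hX; elim=> //= n ->; rewrite f_sigma_ival //; exact: (hX n.+1). Qed.

Fixpoint dyadic (x : R) (n : nat) : seq bool :=
  if n is n'.+1 then rcons (dyadic x n') (fval (dyadic x n') + half_pow n'.+1 <= x)
  else [::].

Lemma size_dyadic (x : R) n : size (dyadic x n) = n.
Proof. by elim: n => //= n IH; rewrite size_rcons IH. Qed.

Lemma dyadicP (x : R) n :
  0 <= x <= 1 -> fval (dyadic x n) <= x <= fval (dyadic x n) + half_pow n.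
Proof.
move=> /andP[y0 y1]; elim: n => [|n /andP[IH1 IH2]] /=.
  by rewrite /fval big_ord0 half_pow0 add0r y0 y1.
rewrite fval_rcons size_dyadic; have := half_powS n.
have [hb|hb] := boolP (fval (dyadic x n) + half_pow n.+1 <= x).
  by rewrite /= mul1r => hh; apply/andP; split; lra.
by rewrite /= mul0r addr0 -ltNge in hb * => hh; apply/andP; split; lra.
Qed.

Lemma ival_cyl_dyadic (x : R) n W :
  0 <= x <= 1 -> cyl (dyadic x n) W -> `|ival W - x| <= half_pow n.
Proof.
move=> hy hc; have /andP[d1 d2] := dyadicP x n hy.
have e : fval (dyadic x n) = pval W n by rewrite (fval_cyl _ _ hc) size_dyadic.
have := ival_ge W n; have := ival_le W n; rewrite e in d1 d2 => h1 h2.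
by rewrite ler_norml; apply/andP; split; lra.
Qed.

Lemma half_pow_small (e : R) : 0 < e -> exists n, half_pow n < e.
Proof.
move=> e0; have [N _ hN] := near_infty_natSinv_expn_lt (PosNum e0).
by exists N; have := hN N (leqnn N); rewrite /= mul1r.
Qed.

Lemma dense_from_cylinders (A : set R) :
  (forall x n, 0 <= x <= 1 -> exists W, cyl (dyadic x n) W /\ A (ival W)) ->
  `[0, 1] `<=` closure A.
Proof.
move=> hA x; rewrite /= in_itv /= => hx B /nbhs_ballP [e e0 hB].
have [n hn] := half_pow_small e e0; have [W [hW AW]] := hA x n hx.
exists (ival W); split => //; apply: hB; rewrite /ball /= distrC.
exact: le_lt_trans (ival_cyl_dyadic x n W hx hW) hn.
Qed.

End BinaryValues.

Lemma no_injection_cantor (g : (nat -> bool) -> nat) : ~ injective g.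
Proof.
move=> g_inj; pose h n := epsilon (inhabits (fun _ : nat => false)) (fun c => g c = n).
pose d m := ~~ h m m.
have hd : h (g d) = d.
  apply: g_inj; apply: (epsilon_spec (inhabits (fun _ : nat => false)) (fun c => g c = g d)).
  by exists d.
have : d (g d) = ~~ d (g d) by rewrite [in LHS]/d hd.
by case: (d (g d)).
Qed.

(* The orbit of 0.X(c, u0) under f_sigma is dense in [0, 1]: the orbit of
   X(c, u0) under sigma_inf visits every cylinder. *)
Lemma limit_word_dense_orbit (R : realType) k (sigma : k.-tuple bool -> seq bool) weps
    (k_gt0 : (0 < k)%N) (opt : optimal sigma) (se : strongly_erasing sigma) c u0 :
  sigma weps = [::] ->
  `[0, 1] `<=` closure (range (fun n =>
     iter n (f_sigma sigma weps) (ival (limit_word k_gt0 opt se c u0) : R))).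
Proof.
move=> hw; apply: dense_from_cylinders => x n _.
have [N hN] := limit_word_visits k_gt0 opt se c u0 (dyadic x n).
exists (iter N (sigma_inf sigma) (limit_word k_gt0 opt se c u0)); split => //; exists N => //.
by rewrite orbit_ival // => j; apply: limit_word_not_end0.
Qed.

Unset Implicit Arguments.

Theorem lemma4p3 (R : realType) (k : nat) (sigma : k.-tuple bool -> seq bool)
  (weps : k.-tuple bool) :
  (2 <= k)%N ->
  sigma weps = [::] ->
  (forall b, sigma b = [::] -> b = weps) ->
  strongly_erasing sigma ->
  val weps <> nseq k true ->
  optimal sigma ->
  let D := [set x : R | x \in `[0, 1] /\
              `[0, 1] `<=` closure (range (fun n => iter n (f_sigma sigma weps) x))] in
  ~ countable D /\ `[(0:R), 1] `<=` closure D.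
Proof.
move=> k2 hw _ se _ opt D; have k_gt0 : (0 < k)%N by lia.
pose X c u0 := limit_word k_gt0 opt se c u0.
have inD c u0 : D (ival (X c u0)).
  by split; [rewrite inE /= in_itv /= ival_itv | exact: limit_word_dense_orbit].
split.
  (* c |-> 0.X(c, []) injects Cantor space into D *)
  move=> /countable_injP [f f_inj].
  apply: (@no_injection_cantor (fun c => f (ival (X c [::]) : R))).
  move=> c c' /f_inj e; apply: (@limit_word_inj _ _ k_gt0 opt se [::]).
  apply: (ival_inj _ _ (limit_word_not_end0 _ _ _ _ _ 0) (limit_word_not_end0 _ _ _ _ _ 0)).
  by apply: e; rewrite inE; apply: inD.
(* the points 0.X(c, u0), u0 the first binary digits of x, approach x *)
apply: dense_from_cylinders => x n _; exists (X (fun _ => false) (dyadic x n)).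
by split; [apply: cyl_limit_word | apply: inD].
Qed.
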